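(* There is a deterministic distributed dynamic data structure for triangle membership listing which handles edge insertions and deletions in $O(1)$ amortized rounds.
   Context: Highly dynamic network model: a synchronous network on a fixed set $V$ of $n$ nodes with unique identifiers starts as the empty graph; at the beginning of round $i$ the graph is $G_i=(V,E_i)$, obtained from the previous graph by an adversary inserting and/or deleting an arbitrary (unbounded) set of edges. At the start of each round every node is notified only of the insertions/deletions of edges incident to it; then each node may send a message of $O(\log n)$ bits to each of its current neighbors. A distributed dynamic data structure consists of a local part $DS_v$ at each node $v$; at the end of every round, $DS_v$ may be queried and must answer immediately, without any further communication, either with a correct answer to the query or with the answer $\texttt{inconsistent}$. The amortized round complexity is at most $k$ if for every round $i$, the number of rounds up to round $i$ in which at least one node $v$ has $DS_v$ in an inconsistent state, divided by the total number of topology changes (edge insertions/deletions) that occurred up to round $i$, is at most $k$. Triangle membership listing: the data structure $DS_v$ at each node $v$ must respond at the end of round $i$ to a query of the form $\{v,u,w\}$ with $\texttt{true}$ if $\{v,u,w\}$ forms a triangle in $G_i$, $\texttt{false}$ if it does not, or $\texttt{inconsistent}$. *)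

From mathcomp Require Import all_boot.

Set Implicit Arguments.
Unset Strict Implicit.
Unset Printing Implicit Defensive.

(* An adversary is a sequence of graphs G 0, G 1, G 2, ... given by their
   adjacency relations; G i is the graph at the beginning (and during) round i.
   Round 0 is the initial state (empty graph); the rounds are i = 1, 2, ... *)
Definition graph_seq (n : nat) := nat -> 'I_n -> 'I_n -> bool.

Definition valid_adversary n (G : graph_seq n) : Prop :=
  [/\ (forall u v, G 0 u v = false),
      (forall i u v, G i u v = G i v u)
    & (forall i u, G i u u = false)].

(* Answers to queries: Some true = true, Some false = false,
   None = inconsistent. *)
Definition answer := option bool.

(* A deterministic distributed algorithm on n nodes with messages taken
   from 'I_B (plus the possibility of sending nothing).  Each node v runs
   the same code, parameterised by its identifier v.  In round i:
   - [notify v s ins del]: v is told the sets of nodes u such that the edge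
     {v,u} was inserted (ins) resp. deleted (del) at the beginning of round i;
   - [send v s u]: message sent by v to its current neighbour u;
   - [receive v s inbox]: v updates its state with the messages received
     from its current neighbours (inbox u = None if u is not a neighbour
     or sent nothing);
   - [query v s u w]: the answer of DS_v to the query {v,u,w} at the end of
     the round, computed locally without communication. *)
Record algorithm (n B : nat) := Algorithm {
  state : Type;
  init : 'I_n -> state;
  notify : 'I_n -> state -> {set 'I_n} -> {set 'I_n} -> state;
  send : 'I_n -> state -> 'I_n -> option 'I_B;
  receive : 'I_n -> state -> ('I_n -> option 'I_B) -> state;
  query : 'I_n -> state -> 'I_n -> 'I_n -> answer }.

Arguments state {n B} a.
Arguments init {n B} a _.
Arguments notify {n B} a _ _ _ _.
Arguments send {n B} a _ _ _.
Arguments receive {n B} a _ _ _.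
Arguments query {n B} a _ _ _ _.

Definition notified n B (A : algorithm n B) (G : graph_seq n) (i : nat)
    (prev : 'I_n -> state A) (v : 'I_n) : state A :=
  notify A v (prev v) [set u | G i.+1 v u && ~~ G i v u]
                      [set u | ~~ G i.+1 v u && G i v u].

Arguments notified {n B} A G i prev v.

Fixpoint run n B (A : algorithm n B) (G : graph_seq n) (i : nat) : 'I_n -> state A :=
  match i with
  | 0 => init A
  | i'.+1 => fun v =>
      let s1 := notified A G i' (run A G i') in
      receive A v (s1 v) (fun u => if G i'.+1 v u then send A u (s1 u) v else None)
  end.

Arguments run {n B} A G i _.

Definition is_triangle n (G : graph_seq n) (i : nat) (v u w : 'I_n) : bool :=
  [&& G i v u, G i u w & G i v w].

Definition acceptable (a : answer) (b : bool) : bool :=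
  match a with Some a' => a' == b | None => true end.

Definition inconsistent_round n B (A : algorithm n B) (G : graph_seq n) (i : nat) : bool :=
  [exists v, exists u, exists w, query A v (run A G i v) u w == None].

Arguments inconsistent_round {n B} A G i.

Definition changes n (G : graph_seq n) (j : nat) : nat :=
  #|[set p : 'I_n * 'I_n | (p.1 < p.2)%N && (G j p.1 p.2 != G j.-1 p.1 p.2)]|.

Definition num_inconsistent_rounds n B (A : algorithm n B) (G : graph_seq n) (i : nat) : nat :=
  \sum_(1 <= j < i.+1) inconsistent_round A G j.

Arguments num_inconsistent_rounds {n B} A G i.

Definition total_changes n (G : graph_seq n) (i : nat) : nat :=
  \sum_(1 <= j < i.+1) changes G j.

Arguments total_changes {n} G i.
Arguments changes {n} G j.
Arguments is_triangle {n} G i v u w.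

(* Message alphabet of size (n+1)^c, i.e. O(log n)-bit messages. *)
Definition msg_bound (c n : nat) : nat := (n.+1) ^ c.

Definition triangle_DS_amortized n B (A : algorithm n B) (k : nat) : Prop :=
  forall G : graph_seq n, valid_adversary G ->
    (forall i, (0 < i)%N -> forall v u w,
        acceptable (query A v (run A G i v) u w) (is_triangle G i v u w)) /\
    (forall i, (num_inconsistent_rounds A G i <= k * total_changes G i)%N).

Arguments triangle_DS_amortized {n B} A k.

From mathcomp Require Import all_boot zify.

Set Implicit Arguments.
Unset Strict Implicit.
Unset Printing Implicit Defensive.

(* Each node v keeps, for every neighbour y, a queue of announcements ("the
   edge vx changed") and of replies ("the edge vx has status b", owed to y
   after y announced x), and sends one queued item per round to each
   neighbour.  When v learns of a change at the edge vx it announces it to all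
   its neighbours y, who thereby learn vx and answer with the status of yx,
   from which v learns the edges between x and its neighbours.  Node v
   declares itself inconsistent while some neighbour still has items queued
   for it; a belief of v about an edge uw between two neighbours can only be
   wrong while an item about it is queued on the links vu or vw.

   On a link uv, the load 2 * #announcements + #replies of both directions
   drops by one in every round in which it is positive (an announcement sent
   is replaced by a single reply) and grows by at most 4 per topology change.
   Hence all link loads are bounded by one global counter that grows by 4 per
   change and drops by one in each round where it is positive; since an
   inconsistent round forces a positive link load, there are at most 4
   inconsistent rounds per change. *)

Section Credit.
Variables (k : nat) (c : nat -> nat).

Fixpoint credit j := if j is j'.+1 then credit j' + k * c j'.+1 - 1 else 0.

Lemma credit_count_le I :
  credit I + \sum_(1 <= j < I.+1) (0 < credit j) <= k * \sum_(1 <= j < I.+1) c j.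
Proof.
elim: I => [|I IH]; first by rewrite !big_geq.
rewrite !(big_nat_recr I.+1) //= mulnDr.
set d := credit I + k * c I.+1 - 1.
have : d + (0 < d) <= credit I + k * c I.+1 by case: (posnP d) => [->|d_gt0] /=; lia.
lia.
Qed.

Lemma count_le_credit (p : pred nat) I :
  (forall j, 0 < j -> p j -> 0 < credit j) ->
  \sum_(1 <= j < I.+1) p j <= k * \sum_(1 <= j < I.+1) c j.
Proof.
move=> p_credit; apply: leq_trans (credit_count_le I); apply: leq_trans (leq_addl _ _).
rewrite big_nat_cond [X in _ <= X]big_nat_cond.
apply: leq_sum => j /andP[/andP[j_gt0 _] _].
by case: (boolP (p j)) => // /(p_credit _ j_gt0) ->.
Qed.

End Credit.

Section Encoding.
Variables (T : finType) (B : nat).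
Hypothesis card_le : #|T| <= B.

Definition encode (t : T) : 'I_B := widen_ord card_le (enum_rank t).

Definition decode (o : option 'I_B) : option T :=
  obind (fun i => [pick t | encode t == i]) o.

Lemma encode_inj : injective encode.
Proof. by move=> t t' [] /val_inj/enum_rank_inj. Qed.

Lemma encodeK (o : option T) : decode (omap encode o) = o.
Proof.
case: o => //= t.
by case: pickP => [t' /eqP/encode_inj -> //|/(_ t)]; rewrite eqxx.
Qed.

End Encoding.

Lemma card_nbrs_le_pairs m (D : rel 'I_m) u : symmetric D -> irreflexive D ->
  #|[set x | D u x]| <= #|[set p : 'I_m * 'I_m | (p.1 < p.2)%N && D p.1 p.2]|.
Proof.
move=> Dsym Dirr.
pose f (x : 'I_m) := if (u < x)%N then (u, x) else (x, u).
pose g (p : 'I_m * 'I_m) := if p.1 == u then p.2 else p.1.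
have fK : cancel f g.
  by move=> x; rewrite /f /g; case: ltnP => _ /=; rewrite ?eqxx //; case: eqP.
rewrite -(card_imset _ (can_inj fK)); apply: subset_leq_card.
apply/subsetP => p /imsetP[x]; rewrite inE => Dux ->{p}; rewrite inE /f.
case: (ltngtP u x) => [ux|xu|/val_inj xu] /=.
- by rewrite ux.
- by rewrite xu Dsym.
- by move: Dux; rewrite xu Dirr.
Qed.

Section Queues.
Variable V : finType.
Implicit Types (a r : {set V}) (x : V).

Definition next_item a r : option (bool * V) :=
  if [pick x in a] is Some x then Some (true, x) else omap (pair false) [pick x in r].

Definition rest_announce a r := if next_item a r is Some (true, x) then a :\ x else a.
Definition rest_reply a r := if next_item a r is Some (false, x) then r :\ x else r.

Definition requested (o : option (bool * V)) : {set V} :=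
  if o is Some (true, x) then [set x] else set0.

Definition load a r := 2 * #|a| + #|r|.

Variant next_item_spec a r : option (bool * V) -> {set V} -> {set V} -> Type :=
  | NextAnnounce x of x \in a : next_item_spec a r (Some (true, x)) (a :\ x) r
  | NextReply x of a = set0 & x \in r : next_item_spec a r (Some (false, x)) a (r :\ x)
  | NextNone of a = set0 & r = set0 : next_item_spec a r None a r.

Lemma next_itemP a r :
  next_item_spec a r (next_item a r) (rest_announce a r) (rest_reply a r).
Proof.
rewrite /rest_announce /rest_reply /next_item.
case: pickP => [x xa|a0]; first by constructor.
have a_eq0 : a = set0 by apply/setP => x; rewrite inE a0.
case: pickP => [x xr|r0] /=; first by constructor.
by constructor => //; apply/setP => x; rewrite inE r0.
Qed.

Lemma mem_rest a r x : x \in a :|: r -> omap snd (next_item a r) != Some x ->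
  x \in rest_announce a r :|: rest_reply a r.
Proof.
case: next_itemP => [y _|y -> _|-> ->] //= x_in ne_yx;
  have xy : x != y by apply: contraNneq _ ne_yx => ->.
- by rewrite !inE xy /= in x_in *.
- by rewrite !inE xy in x_in *.
Qed.

Lemma rest_announce_sub a r : rest_announce a r \subset a.
Proof. by case: next_itemP => // x _; apply: subD1set. Qed.

Lemma mem_announce_rest a r x : x \in a ->
  (x \in rest_announce a r) || (x \in requested (next_item a r)).
Proof.
case: next_itemP => [y _|y -> _|-> _]; rewrite ?inE //.
by case: eqP => [->|_] ->; rewrite ?orbT.
Qed.

Lemma requested_eq0 a r : (requested (next_item a r) == set0) = (a == set0).
Proof.
case: next_itemP => [y ya|_ -> _|-> _] //=; rewrite ?eqxx //.
by apply/idP/idP => /eqP/setP/(_ y); rewrite !inE ?ya ?eqxx.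
Qed.

Lemma load_gt0 a r : (0 < load a r) = (a :|: r != set0).
Proof. by rewrite /load addn_gt0 muln_gt0 !card_gt0 setU_eq0 negb_and. Qed.

Lemma load_rest a r :
  load (rest_announce a r) (rest_reply a r) + #|requested (next_item a r)| = load a r - 1.
Proof.
rewrite /load; case: next_itemP => [x xa|x -> xr|-> ->] /=.
- by rewrite (cardsD1 x a) xa cards1; lia.
- by rewrite (cardsD1 x r) xr !cards0; lia.
- by rewrite !cards0.
Qed.

Lemma load_setUr a r r' : load a (r :|: r') <= load a r + #|r'|.
Proof. by rewrite /load cardsU; lia. Qed.

End Queues.

Section Algorithm.
Variable n : nat.
Local Notation V := 'I_n.

(* A message [((k, x), b, more)] carries the sender's next queued item about
   the edge to [x] (an announcement if [k], a reply otherwise), the current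
   status [b] of that edge, and whether further items remain queued. *)
Definition message_t := (bool * V * bool * bool)%type.

Definition msg_item (m : message_t) : bool * V := m.1.1.
Definition msg_status (m : message_t) : bool := m.1.2.
Definition msg_more (m : message_t) : bool := m.2.

Lemma card_message_le : #|{: message_t}| <= msg_bound 4 n.
Proof. by rewrite !card_prod !card_bool card_ord /msg_bound !expnS expn0; nia. Qed.

(* For a neighbour [y] of the owner [v]: [announce y] holds the [x] such that
   [y] must learn that the edge [vx] changed, [reply y] the [x] such that [y]
   announced [x] and must learn the status of [vx]; [know u w] is the belief
   about the edge [uw]. *)
Record node_state := NodeState {
  nbrs : {set V};
  announce : V -> {set V};
  reply : V -> {set V};
  know : V -> V -> bool;
  inconsistent : bool }.

Definition queue (s : node_state) (y : V) := announce s y :|: reply s y.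

Definition empty_state : node_state :=
  NodeState set0 (fun _ => set0) (fun _ => set0) (fun _ _ => false) false.

Definition notify_step (s : node_state) (ins del : {set V}) : node_state :=
  NodeState ((nbrs s :|: ins) :\: del)
    (fun y => (if y \in ins then set0 else announce s y) :|: (ins :|: del))
    (fun y => if y \in ins then set0 else reply s y)
    (know s) (inconsistent s).

Definition message (s : node_state) (y : V) : option message_t :=
  let a := announce s y in let r := reply s y in
  omap (fun it => (it, it.2 \in nbrs s, rest_announce a r :|: rest_reply a r != set0))
    (next_item a r).

Definition told (o : option message_t) (q : V) : option bool :=
  if o is Some m then if (msg_item m).2 == q then Some (msg_status m) else None
  else None.

Definition learn (news : V -> option message_t) (k : V -> V -> bool) (p q : V) :=
  if told (news p) q is Some b then b
  else if told (news q) p is Some b then b else k p q.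

Definition receive_step (s : node_state) (inbox : V -> option 'I_(msg_bound 4 n)) :=
  let news y := decode card_message_le (inbox y) in
  NodeState (nbrs s)
    (fun y => rest_announce (announce s y) (reply s y))
    (fun y => rest_reply (announce s y) (reply s y) :|: requested (omap msg_item (news y)))
    (learn news (know s))
    [exists y in nbrs s, oapp msg_more false (news y) || (announce s y != set0)].

Definition answer_query (s : node_state) (u w : V) : answer :=
  if inconsistent s then None
  else Some [&& u \in nbrs s, w \in nbrs s, u != w & know s u w].

Definition triangle_alg : algorithm n (msg_bound 4 n) :=
  @Algorithm n _ node_state (fun _ => empty_state) (fun _ => notify_step)
    (fun _ s y => omap (encode card_message_le) (message s y))
    (fun _ => receive_step) (fun _ => answer_query).

Lemma item_message s y :
  omap msg_item (message s y) = next_item (announce s y) (reply s y).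
Proof. by rewrite /message; case: next_item. Qed.

Lemma more_message s y : oapp msg_more false (message s y) =
  (rest_announce (announce s y) (reply s y) :|: rest_reply (announce s y) (reply s y) != set0).
Proof. by rewrite /message; case: next_itemP => //= -> ->; rewrite setU0 eqxx. Qed.

Lemma told_message s y x : told (message s y) x =
  if omap snd (next_item (announce s y) (reply s y)) == Some x
  then Some (x \in nbrs s) else None.
Proof.
rewrite /message /told; case: next_item => [[k z]|] //=.
by rewrite (inj_eq (@Some_inj _)); case: eqP => [->|].
Qed.

End Algorithm.

Section Run.
Variables (n : nat) (G : graph_seq n).
Hypothesis HG : valid_adversary G.
Local Notation V := 'I_n.

Definition cfg i : V -> node_state n := run (triangle_alg n) G i.
Definition ncfg i : V -> node_state n := notified (triangle_alg n) G i (cfg i).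

Definition news i v y : option (message_t n) :=
  if G i.+1 v y then message (ncfg i y) v else None.

Definition changed i u : {set V} := [set x | G i.+1 u x != G i u x].

Lemma G0 u v : G 0 u v = false.
Proof. by case: HG. Qed.

Lemma G_sym i u v : G i u v = G i v u.
Proof. by case: HG. Qed.

Lemma G_irr i u : G i u u = false.
Proof. by case: HG. Qed.

Lemma card_changed i u : #|changed i u| <= changes G i.+1.
Proof.
apply: (card_nbrs_le_pairs (D := fun x y => G i.+1 x y != G i x y)) => [x y|x] /=.
  by rewrite G_sym [G i x y]G_sym.
by rewrite !G_irr.
Qed.

Lemma cfg_succ i v : cfg i.+1 v = receive_step (ncfg i v)
  (fun y => if G i.+1 v y then omap (encode (card_message_le n)) (message (ncfg i y) v) else None).
Proof. by []. Qed.

Lemma decode_inbox i v y :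
  decode (card_message_le n)
    (if G i.+1 v y then omap (encode (card_message_le n)) (message (ncfg i y) v) else None)
  = news i v y.
Proof. by rewrite /news; case: ifP; rewrite ?encodeK. Qed.

Lemma nbrs_cfg i v : nbrs (cfg i v) = [set x | G i v x].
Proof.
elim: i v => [|i IH] v; apply/setP => x; first by rewrite !inE G0.
rewrite cfg_succ /= IH !inE.
by case: (G i.+1 v x); case: (G i v x).
Qed.

Lemma nbrs_ncfg i v : nbrs (ncfg i v) = [set x | G i.+1 v x].
Proof. exact: (nbrs_cfg i.+1 v). Qed.

Lemma announce_ncfg i u v : G i.+1 u v ->
  announce (ncfg i u) v = (if G i u v then announce (cfg i u) v else set0) :|: changed i u.
Proof.
move=> uv; rewrite /= in_set uv /=; congr (_ :|: _); first by case: (G i u v).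
by apply/setP => x; rewrite !inE; case: (G i.+1 u x); case: (G i u x).
Qed.

Lemma reply_ncfg i u v : G i.+1 u v ->
  reply (ncfg i u) v = if G i u v then reply (cfg i u) v else set0.
Proof. by move=> uv; rewrite /= in_set uv; case: (G i u v). Qed.

Lemma announce_cfg i u v :
  announce (cfg i.+1 u) v = rest_announce (announce (ncfg i u) v) (reply (ncfg i u) v).
Proof. by []. Qed.

Lemma reply_cfg i u v : G i.+1 u v ->
  reply (cfg i.+1 u) v = rest_reply (announce (ncfg i u) v) (reply (ncfg i u) v)
    :|: requested (next_item (announce (ncfg i v) u) (reply (ncfg i v) u)).
Proof. by move=> uv; rewrite cfg_succ /= decode_inbox /news uv item_message. Qed.

Lemma know_cfg i v u w : know (cfg i.+1 v) u w =
  if told (news i v u) w is Some b then b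
  else if told (news i v w) u is Some b then b else know (cfg i v) u w.
Proof. by rewrite cfg_succ /= /learn !decode_inbox. Qed.

Lemma inconsistent_cfg i v :
  inconsistent (cfg i.+1 v) = [exists y, G i.+1 v y && (queue (cfg i.+1 y) v != set0)].
Proof.
rewrite cfg_succ /receive_step; cbn [inconsistent]; apply: eq_existsb => y.
rewrite nbrs_ncfg inE decode_inbox /news; case: ifP => [vy|//]; rewrite !andTb.
have yv : G i.+1 y v by rewrite G_sym.
rewrite more_message /queue announce_cfg (reply_cfg yv) setUA.
by rewrite [X in _ = ~~ X]setU_eq0 negb_and requested_eq0.
Qed.

(* Items still to be delivered that will update the belief of [v] about [uw];
   an announcement of [u] to [w] counts because [w] will reply with [uw]. *)
Definition pending (S : V -> node_state n) v u w :=
  [|| w \in queue (S u) v, u \in queue (S w) v,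
      u \in announce (S v) w | w \in announce (S v) u].

Lemma told_news i v u w b : told (news i v u) w = Some b -> b = G i.+1 u w.
Proof.
rewrite /news; case: ifP => // _; rewrite told_message nbrs_ncfg inE.
by case: eqP => // _ [].
Qed.

Lemma queue_step i u v x : G i.+1 u v ->
  x \in queue (ncfg i u) v -> told (news i v u) x = None -> x \in queue (cfg i.+1 u) v.
Proof.
move=> uv x_in; rewrite /news G_sym uv told_message; case: eqP => // ne_x _.
rewrite /queue announce_cfg (reply_cfg uv) setUA inE mem_rest //.
by apply/eqP.
Qed.

Lemma announce_step i v w u : G i.+1 v w ->
  u \in announce (ncfg i v) w ->
  (u \in announce (cfg i.+1 v) w) || (u \in queue (cfg i.+1 w) v).
Proof.
move=> vw /(mem_announce_rest (reply (ncfg i v) w)) /orP[->//|u_req].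
have wv : G i.+1 w v by rewrite G_sym.
by rewrite /queue (reply_cfg wv) !inE u_req !orbT.
Qed.

Lemma changed_announce i u v x : G i.+1 u v ->
  x \in changed i u -> x \in announce (ncfg i u) v.
Proof. by move=> uv x_ch; rewrite announce_ncfg // inE x_ch orbT. Qed.

Lemma announce_ncfg_old i u v x : G i.+1 u v -> G i u v ->
  x \in announce (cfg i u) v -> x \in announce (ncfg i u) v.
Proof. by move=> uv' uv x_in; rewrite announce_ncfg // uv inE x_in. Qed.

Lemma queue_ncfg_old i u v x : G i.+1 u v -> G i u v ->
  x \in queue (cfg i u) v -> x \in queue (ncfg i u) v.
Proof.
move=> uv' uv; rewrite /queue (reply_ncfg uv') uv => /setUP[x_in|x_in]; apply/setUP.
  by left; apply: announce_ncfg_old.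
by right.
Qed.

Lemma pending_step i v u w : G i v u -> G i v w -> G i.+1 v u -> G i.+1 v w ->
  told (news i v u) w = None -> told (news i v w) u = None ->
  pending (cfg i) v u w -> pending (cfg i.+1) v u w.
Proof.
move=> vu vw vu' vw' tu tw.
have uv : G i u v by rewrite G_sym.
have wv : G i w v by rewrite G_sym.
have uv' : G i.+1 u v by rewrite G_sym.
have wv' : G i.+1 w v by rewrite G_sym.
case/or4P => x_in.
- by rewrite /pending (queue_step uv' (queue_ncfg_old uv' uv x_in) tu).
- by rewrite /pending (queue_step wv' (queue_ncfg_old wv' wv x_in) tw) orbT.
- by case/orP: (announce_step vw' (announce_ncfg_old vw' vw x_in)) => x_in';
    rewrite /pending x_in' ?orTb ?orbT.
- by case/orP: (announce_step vu' (announce_ncfg_old vu' vu x_in)) => x_in';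
    rewrite /pending x_in' ?orTb ?orbT.
Qed.

Lemma know_step i v u w : G i.+1 v u -> G i.+1 v w ->
  told (news i v u) w = None -> told (news i v w) u = None ->
  (G i v u -> G i v w -> (know (cfg i v) u w == G i u w) || pending (cfg i) v u w) ->
  (know (cfg i v) u w == G i.+1 u w) || pending (cfg i.+1) v u w.
Proof.
move=> vu' vw' tu tw IH.
have uv' : G i.+1 u v by rewrite G_sym.
case: (eqVneq (G i.+1 u w) (G i u w)) => [uw_same|uw_changed]; last first.
  have w_ch : w \in changed i u by rewrite inE uw_changed.
  by rewrite /pending (queue_step uv' _ tu) ?orbT // inE (changed_announce uv' w_ch).
case vu: (G i v u); last first.
  have u_ch : u \in changed i v by rewrite inE vu' vu.
  by case/orP: (announce_step vw' (changed_announce vw' u_ch)) => u_in;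
    rewrite /pending u_in ?orTb ?orbT.
case vw: (G i v w); last first.
  have w_ch : w \in changed i v by rewrite inE vw' vw.
  by case/orP: (announce_step vu' (changed_announce vu' w_ch)) => w_in;
    rewrite /pending w_in ?orTb ?orbT.
case/orP: (IH vu vw) => [|was_pending]; first by rewrite uw_same => ->.
by rewrite (pending_step vu vw vu' vw' tu tw was_pending) orbT.
Qed.

Lemma know_invariant i v u w : G i v u -> G i v w -> u != w ->
  (know (cfg i v) u w == G i u w) || pending (cfg i) v u w.
Proof.
elim: i => [|i IH] vu vw uw; first by rewrite G0 in vu.
rewrite know_cfg.
case tu: (told (news i v u) w) => [b|]; first by rewrite (told_news tu) eqxx.
case tw: (told (news i v w) u) => [b|]; first by rewrite (told_news tw) G_sym eqxx.
exact: know_step vu vw tu tw (fun vu vw => IH vu vw uw).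
Qed.

Lemma queue_of_announce i v w : G i.+1 v w ->
  announce (cfg i.+1 v) w != set0 -> queue (cfg i.+1 w) v != set0.
Proof.
move=> vw; rewrite announce_cfg => /set0Pn[x /(subsetP (rest_announce_sub _ _)) x_in].
have : requested (next_item (announce (ncfg i v) w) (reply (ncfg i v) w)) != set0.
  by rewrite requested_eq0; apply/set0Pn; exists x.
have wv : G i.+1 w v by rewrite G_sym.
case/set0Pn => z z_req; apply/set0Pn; exists z.
by rewrite /queue (reply_cfg wv) !in_setU z_req !orbT.
Qed.

Lemma pending_inconsistent i v u w : G i.+1 v u -> G i.+1 v w ->
  pending (cfg i.+1) v u w -> inconsistent (cfg i.+1 v).
Proof.
rewrite inconsistent_cfg => vu vw; case/or4P => x_in; apply/existsP.
- by exists u; rewrite vu; apply/set0Pn; exists w.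
- by exists w; rewrite vw; apply/set0Pn; exists u.
- by exists w; rewrite vw queue_of_announce //; apply/set0Pn; exists u.
- by exists u; rewrite vu queue_of_announce //; apply/set0Pn; exists w.
Qed.

Lemma query_correct i v u w : 0 < i ->
  acceptable (query (triangle_alg n) v (run (triangle_alg n) G i v) u w)
    (is_triangle G i v u w).
Proof.
case: i => // i _.
change (acceptable (answer_query (cfg i.+1 v) u w) (is_triangle G i.+1 v u w)).
rewrite /answer_query nbrs_cfg !inE /is_triangle.
case: ifP => // consistent.
case vu: (G i.+1 v u); case vw: (G i.+1 v w); rewrite ?andbF //.
case: (eqVneq u w) => [<-|uw]; first by rewrite G_irr.
case/orP: (know_invariant vu vw uw) => [/eqP know_uw|was_pending].
  by rewrite know_uw /= andbT.
by rewrite (pending_inconsistent vu vw was_pending) in consistent.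
Qed.

Definition link_load (S : V -> node_state n) u v :=
  load (announce (S u) v) (reply (S u) v) + load (announce (S v) u) (reply (S v) u).

Lemma load_ncfg i u v : G i.+1 u v ->
  load (announce (ncfg i u) v) (reply (ncfg i u) v) <=
  (if G i u v then load (announce (cfg i u) v) (reply (cfg i u) v) else 0)
    + 2 * #|changed i u|.
Proof.
move=> uv; rewrite announce_ncfg // reply_ncfg // /load cardsU.
by case: (G i u v); rewrite ?cards0; lia.
Qed.

Lemma link_load_ncfg i u v : G i.+1 u v ->
  link_load (ncfg i) u v <=
  (if G i u v then link_load (cfg i) u v else 0) + 4 * changes G i.+1.
Proof.
move=> uv; have vu : G i.+1 v u by rewrite G_sym.
have := load_ncfg uv; have := load_ncfg vu.
have := card_changed i u; have := card_changed i v.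
by rewrite /link_load [G i v u]G_sym; case: (G i u v); lia.
Qed.

Lemma link_load_cfg i u v : G i.+1 u v ->
  link_load (cfg i.+1) u v <= link_load (ncfg i) u v - 1.
Proof.
move=> uv; have vu : G i.+1 v u by rewrite G_sym.
rewrite /link_load !announce_cfg (reply_cfg uv) (reply_cfg vu).
set au := announce (ncfg i u) v; set ru := reply (ncfg i u) v.
set av := announce (ncfg i v) u; set rv := reply (ncfg i v) u.
have := load_rest au ru; have := load_rest av rv.
have := load_setUr (rest_announce au ru) (rest_reply au ru) (requested (next_item av rv)).
have := load_setUr (rest_announce av rv) (rest_reply av rv) (requested (next_item au ru)).
lia.
Qed.

Lemma link_load_le_credit i u v : G i u v -> link_load (cfg i) u v <= credit 4 (changes G) i.
Proof.
elim: i u v => [|i IH] u v uv; first by rewrite G0 in uv.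
have old : (if G i u v then link_load (cfg i) u v else 0) <= credit 4 (changes G) i.
  by case: ifP => // /IH.
have := link_load_ncfg uv; have := link_load_cfg uv.
rewrite [credit _ _ i.+1]/=; lia.
Qed.

Lemma inconsistent_credit i :
  inconsistent_round (triangle_alg n) G i.+1 -> 0 < credit 4 (changes G) i.+1.
Proof.
case/existsP => v /existsP[u /existsP[w]].
change (answer_query (cfg i.+1 v) u w == None -> 0 < credit 4 (changes G) i.+1).
rewrite /answer_query; case: ifP => // + _.
rewrite inconsistent_cfg => /existsP[y /andP[vy queue_y]].
have : 0 < link_load (cfg i.+1) v y by rewrite /link_load addn_gt0 [X in _ || X]load_gt0 queue_y orbT.
by move/leq_trans; apply; apply: link_load_le_credit.
Qed.

Lemma inconsistent_rounds_le I :
  num_inconsistent_rounds (triangle_alg n) G I <= 4 * total_changes G I.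
Proof. by apply: count_le_credit => -[|j] // _; apply: inconsistent_credit. Qed.

End Run.

Theorem theorem1 :
  exists c k : nat, forall n : nat,
    exists A : algorithm n (msg_bound c n), triangle_DS_amortized A k.
Proof.
exists 4, 4 => n; exists (triangle_alg n) => G HG; split.
- by move=> i i_gt0 v u w; apply: query_correct.
- by move=> i; apply: inconsistent_rounds_le.
Qed.
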